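(* Let $T\in\mathbb{R}$ and let $S:[0,1]\to\mathbb{R}$ be continuous with $S(0)=S(1)=0$. For $x,y\in\mathbb{R}$ set $x\oplus_S y=\min_{p\in[0,1]}\big(px+(1-p)y-T\,S(p)\big)$. Let $\mathbf{T}$ be an $(n,2)$-tree with $n\ge2$. Then for all $x_1,\ldots,x_n\in\mathbb{R}$, $$(x_1\oplus_S\cdots\oplus_S x_n)_{\mathbf{T}}=\min_{p\in\Delta_n}\Big(\sum_{i=1}^n p_ix_i-T\,S_{\mathbf{T}}(p_1,\ldots,p_n)\Big).$$
   Context: An $(n,2)$-tree is a finite rooted tree in which every vertex is either a leaf or has exactly two children, ordered as a left and a right child, and whose $n$ leaves are labelled bijectively by $\{1,\ldots,n\}$. $\Delta_n=\{p\in[0,\infty)^n:\sum_ip_i=1\}$. For such a tree (or a subtree, whose leaves carry a subset $L$ of labels) define recursively: if the tree is a single leaf labelled $i$, then its value is $x_i$ and its entropy is $0$; otherwise, with left subtree $\mathbf{L}$ (label set $L$) and right subtree $\mathbf{D}$ (label set $D$), the value is $(x_1\oplus_S\cdots\oplus_S x_n)_{\mathbf{T}}=(\text{value of }\mathbf{L})\oplus_S(\text{value of }\mathbf{D})$, and for $p$ a probability vector indexed by the labels, with $P_L=\sum_{i\in L}p_i$, $P_D=\sum_{i\in D}p_i$, $$S_{\mathbf{T}}(p)=S(P_L)+P_L\,S_{\mathbf{L}}\big((p_i/P_L)_{i\in L}\big)+P_D\,S_{\mathbf{D}}\big((p_i/P_D)_{i\in D}\big),$$ where a term $P\,S_{\mathbf{A}}(\cdot/P)$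 is taken to be $0$ when $P=0$. *)

From mathcomp Require Import all_boot all_order all_algebra.
From mathcomp Require Import all_classical all_reals all_analysis.
Set Implicit Arguments. Unset Strict Implicit. Unset Printing Implicit Defensive.
Import Order.TTheory GRing.Theory Num.Theory.
Local Open Scope classical_set_scope.
Local Open Scope ring_scope.

(* Binary trees whose leaves carry labels in 'I_n (labels 0..n-1 stand for 1..n). *)
Inductive tree (n : nat) : Type :=
| Leaf of 'I_n
| Node of tree n & tree n.
Arguments Leaf {n}.
Arguments Node {n}.

Fixpoint leaves n (t : tree n) : seq 'I_n :=
  match t with Leaf i => [:: i] | Node l r => leaves l ++ leaves r end.

Definition n2tree n (t : tree n) : Prop := perm_eq (leaves t) (enum 'I_n).

(* x (+)_S y = min_{p in [0,1]} (p x + (1-p) y - T S(p)), written as the infimum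
   (which is attained since S is continuous on [0,1]). *)
Definition oplusS (R : realType) (T : R) (S : R -> R) (x y : R) : R :=
  inf [set p * x + (1 - p) * y - T * S p | p in `[0, 1]%classic].

Fixpoint treeval (R : realType) (T : R) (S : R -> R) n (t : tree n) (x : 'I_n -> R) : R :=
  match t with
  | Leaf i => x i
  | Node l r => oplusS T S (treeval T S l x) (treeval T S r x)
  end.

(* Tree entropy S_T(p); p is a vector on all labels, only the labels of the
   subtree matter. *)
Fixpoint tent (R : realType) (S : R -> R) n (t : tree n) (p : 'I_n -> R) : R :=
  match t with
  | Leaf _ => 0
  | Node l r =>
      let PL := \sum_(i <- leaves l) p i in
      let PD := \sum_(i <- leaves r) p i in
      S PL
      + (if PL == 0 then 0 else PL * tent S l (fun i => p i / PL))
      + (if PD == 0 then 0 else PD * tent S r (fun i => p i / PD))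
  end.

Definition probvec (R : realType) n (p : 'I_n -> R) : Prop :=
  (forall i, 0 <= p i) /\ \sum_i p i = 1.

(* The entropy of a node splits as S(P_L) plus the mass-weighted entropies of
   the two subtrees, and the mass-weighted sums of the x_i split the same way.
   Hence, by induction on the tree, conditioning a probability vector on the
   two subtrees reduces the minimisation over Delta_n to the minimisation over
   P_L in [0, 1] that defines (+)_S, applied to the values of the subtrees. A
   minimiser is assembled from minimisers p_L, p_D of the subtrees and a
   minimiser c of (+)_S as c p_L + (1 - c) p_D, which is where disjointness of
   the leaf sets is used. *)
From mathcomp Require Import all_boot all_order all_algebra.
From mathcomp Require Import all_classical all_reals all_analysis.
From mathcomp Require Import ring lra.
Set Implicit Arguments. Unset Strict Implicit. Unset Printing Implicit Defensive.
Import Order.TTheory GRing.Theory Num.Theory.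
Import numFieldNormedType.Exports.
Local Open Scope classical_set_scope.
Local Open Scope ring_scope.

Lemma inf_itv_attained (R : realType) (a b : R) (f : R -> R) :
  a <= b -> {within `[a, b], continuous f} ->
  exists2 c, c \in `[a, b] &
    inf [set f p | p in `[a, b]] = f c /\ forall p, p \in `[a, b] -> f c <= f p.
Proof.
move=> ab cf; have [c cab cmin] := EVT_min ab cf.
have lb_fc : lbound [set f p | p in `[a, b]] (f c).
  by move=> _ [p pab <-]; apply: cmin; rewrite inE.
exists c => //; split=> //; apply/eqP; rewrite eq_le; apply/andP; split.
- by apply: ge_inf; [exists (f c) | exists c => //; rewrite -inE].
- by apply: lb_le_inf => //; exists (f c), c => //; rewrite -inE.
Qed.

Lemma oplusS_attained (R : realType) (T : R) (S : R -> R) (x y : R) :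
  {within `[0%R, 1%R], continuous S} ->
  exists2 c, c \in `[0%R, 1%R] &
    oplusS T S x y = c * x + (1 - c) * y - T * S c /\
    forall p, p \in `[0%R, 1%R] ->
      oplusS T S x y <= p * x + (1 - p) * y - T * S p.
Proof.
move=> cS; pose f p := p * x + (1 - p) * y - T * S p.
have cf : {within `[0%R, 1%R], continuous f}.
  move=> u; apply: cvgD; last by apply: cvgN; apply: cvgMl_tmp; exact: cS.
  have clin : continuous (fun p : R => p * x + (1 - p) * y).
    move=> v; apply: cvgD; apply: cvgMr_tmp; first exact: cvg_id.
    by apply: cvgB; [exact: cvg_cst | exact: cvg_id].
  exact: (continuous_subspaceT clin).
have [c c01 [fc cmin]] := inf_itv_attained ler01 cf.
by exists c => //; rewrite /oplusS fc; split=> // p /cmin.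
Qed.

Section TreeEntropy.
Variables (R : realType) (T : R) (S : R -> R) (n : nat).
Implicit Types (t : tree n) (p q : 'I_n -> R).

Definition mass t p : R := \sum_(i <- leaves t) p i.

Definition scaled_tent t p : R :=
  if mass t p == 0 then 0 else mass t p * tent S t (fun i => p i / mass t p).

Lemma tent_Node (l r : tree n) p :
  tent S (Node l r) p = S (mass l p) + scaled_tent l p + scaled_tent r p.
Proof. by []. Qed.

Lemma mass_ge0 t p : (forall i, 0 <= p i) -> 0 <= mass t p.
Proof. by move=> p0; apply: sumr_ge0. Qed.

Lemma tent_eq_in t p q : {in leaves t, p =1 q} -> tent S t p = tent S t q.
Proof.
elim: t p q => [//|l IHl r IHr] p q /= epq.
have epql : {in leaves l, p =1 q} by move=> i li; apply: epq; rewrite mem_cat li.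
have epqr : {in leaves r, p =1 q} by move=> i ri; apply: epq; rewrite mem_cat ri orbT.
rewrite (eq_big_seq _ epql) (eq_big_seq _ epqr).
congr (_ + _ + _); case: eqP => // _; congr (_ * _).
- by apply: IHl => i li /=; rewrite epql.
- by apply: IHr => i ri /=; rewrite epqr.
Qed.

Lemma mass_scale t p q (c : R) :
  {in leaves t, p =1 (fun i => c * q i)} -> mass t q = 1 -> mass t p = c.
Proof.
by move=> epq q1; rewrite /mass (eq_big_seq _ epq) -big_distrr /= -/(mass t q) q1 mulr1.
Qed.

Lemma scaled_tent_scale t p q (c : R) :
  {in leaves t, p =1 (fun i => c * q i)} -> mass t q = 1 ->
  scaled_tent t p = c * tent S t q.
Proof.
move=> epq q1; rewrite /scaled_tent (mass_scale epq q1); case: eqP => [->|/eqP c0]; first by rewrite mul0r.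
congr (_ * _); apply: tent_eq_in => i li /=; rewrite epq //; field; exact: c0.
Qed.

Variable (x : 'I_n -> R).

Definition tree_objective t p : R := \sum_(i <- leaves t) p i * x i - T * tent S t p.

Lemma mass_mul_le t (a : R) :
  (forall q, (forall i, 0 <= q i) -> mass t q = 1 -> a <= tree_objective t q) ->
  forall p, (forall i, 0 <= p i) ->
  mass t p * a <= \sum_(i <- leaves t) p i * x i - T * scaled_tent t p.
Proof.
move=> lb p p0; have P0 := mass_ge0 t p0; rewrite /scaled_tent.
case: eqP => [P_eq0|/eqP P_neq0].
  have pt0 i : i \in leaves t -> p i = 0.
    move: P_eq0 => /eqP; rewrite psumr_eq0 // => /allP/(_ i) h /h.
    by rewrite implyTb => /eqP.
  by rewrite P_eq0 mul0r mulr0 subr0 big1_seq // => i /andP[_ /pt0->]; rewrite mul0r.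
have q0 i : 0 <= p i / mass t p by rewrite divr_ge0.
have q1 : mass t (fun i => p i / mass t p) = 1 by rewrite /mass -big_distrl /= divff.
have := ler_wpM2l P0 (lb _ q0 q1); rewrite /tree_objective mulrBr mulrCA.
congr (_ <= _ - _); rewrite big_distrr /=.
by apply: eq_bigr => i _; field.
Qed.

Hypothesis cS : {within `[0%R, 1%R], continuous S}.

Lemma treeval_le t p : (forall i, 0 <= p i) -> mass t p = 1 ->
  treeval T S t x <= tree_objective t p.
Proof.
elim: t p => [i|l IHl r IHr] p p0; rewrite /tree_objective.
  by rewrite /mass !big_seq1 /= => ->; rewrite mul1r mulr0 subr0.
rewrite tent_Node /mass !big_cat -!/(mass _ p) /= => p1.
have PL0 := mass_ge0 l p0; have PD0 := mass_ge0 r p0.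
have [_ _ [_ lbc]] := oplusS_attained T (treeval T S l x) (treeval T S r x) cS.
have PL01 : mass l p \in `[0%R, 1%R] by rewrite in_itv /= PL0 -p1 lerDl.
have := lbc _ PL01; rewrite (_ : 1 - mass l p = mass r p); last by rewrite -p1 addrC addrK.
have := mass_mul_le IHl p0; have := mass_mul_le IHr p0.
lra.
Qed.

Lemma treeval_attained t : uniq (leaves t) ->
  exists2 p, [/\ forall i, 0 <= p i, {in [predC leaves t], p =1 (fun=> 0)}
                 & mass t p = 1] &
    treeval T S t x = tree_objective t p.
Proof.
rewrite /tree_objective; elim: t => [i _|l IHl r IHr].
  exists (fun j => (j == i)%:R); last by rewrite big_seq1 eqxx mul1r mulr0 subr0.
  split=> [j|j|]; [by case: eqP | by rewrite !inE => /negbTE-> | ].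
  by rewrite /mass big_seq1 eqxx.
rewrite cat_uniq => /and3P[ul /hasPn disj ur].
have [pL [pL0 pLout pL1] eL] := IHl ul; have [pD [pD0 pDout pD1] eD] := IHr ur.
have [c c01 [ec _]] := oplusS_attained T (treeval T S l x) (treeval T S r x) cS.
rewrite in_itv /= in c01; have /andP[c0 c1] := c01.
pose p i := c * pL i + (1 - c) * pD i.
have onl : {in leaves l, p =1 (fun i => c * pL i)}.
  by move=> i li; rewrite /p pDout ?mulr0 ?addr0 // inE; apply/negP=> /disj; rewrite li.
have onr : {in leaves r, p =1 (fun i => (1 - c) * pD i)}.
  by move=> i ri; rewrite /p pLout ?mulr0 ?add0r // inE; apply: disj.
have mass_l := mass_scale onl pL1; have mass_r := mass_scale onr pD1.
exists p.
  split=> [i|i|]; first by rewrite addr_ge0 // mulr_ge0 // subr_ge0.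
    rewrite !inE mem_cat negb_or => /andP[li ri].
    by rewrite /p pLout ?pDout ?inE // !mulr0 addr0.
  by rewrite /mass big_cat /= -!/(mass _ p) mass_l mass_r subrKC.
have sum_l : \sum_(i <- leaves l) p i * x i = c * \sum_(i <- leaves l) pL i * x i.
  by rewrite big_distrr /=; apply: eq_big_seq => i li; rewrite onl // mulrA.
have sum_r : \sum_(i <- leaves r) p i * x i = (1 - c) * \sum_(i <- leaves r) pD i * x i.
  by rewrite big_distrr /=; apply: eq_big_seq => i ri; rewrite onr // mulrA.
rewrite tent_Node (scaled_tent_scale onl pL1) (scaled_tent_scale onr pD1) mass_l.
by rewrite [treeval _ _ _ _]/= ec eL eD big_cat /= sum_l sum_r; ring.
Qed.

End TreeEntropy.

Lemma n2tree_big (R : realType) n (t : tree n) (F : 'I_n -> R) :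
  n2tree t -> \sum_(i <- leaves t) F i = \sum_i F i.
Proof. by move=> ht; rewrite (perm_big _ ht) /= big_enum. Qed.

Theorem theorem10p2 (R : realType) (T : R) (S : R -> R)
  (hScont : {within `[0%R, 1%R], continuous S})
  (hS0 : S 0 = 0) (hS1 : S 1 = 0)
  (n : nat) (hn : (2 <= n)%N) (t : tree n) (ht : n2tree t)
  (x : 'I_n -> R) :
  (exists2 p : 'I_n -> R, probvec p &
     treeval T S t x = \sum_i p i * x i - T * tent S t p) /\
  (forall p : 'I_n -> R, probvec p ->
     treeval T S t x <= \sum_i p i * x i - T * tent S t p).
Proof.
have ut : uniq (leaves t) by rewrite (perm_uniq ht) enum_uniq.
split.
- have [p [p0 _ p1] ->] := treeval_attained T x hScont ut.
  rewrite /mass (n2tree_big _ ht) in p1.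
  by exists p => //; rewrite /tree_objective (n2tree_big _ ht).
- move=> p [p0 p1]; rewrite -(n2tree_big (fun i => p i * x i) ht).
  by apply: treeval_le; rewrite // /mass (n2tree_big _ ht).
Qed.
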